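(* Let $f(u,v,s)=\big(u,\ u^2f_{21}(u)+v^2+usf_{24}(u,s),\ u^2f_{31}(u)+v^2f_{32}(u,v,s)+usf_{34}(u,s)\big)$ with $f_{32}=c_0(u,s)+vc_1(u,s)+v^2c_2(u,v^2,s)+v^3c_3(u,v^2,s)$, $c_0(0,0)=0$, $c_3(0,0,0)\ne0$, and $c_1(u,s)=s+usd_1(s)+u^2d_2(s)+u^3d_3(s)+u^4d_4(u,s)$ with $d_2(0)>0$; put $d_{20}=\sqrt{d_2(0)}$. For $\tilde s\ne0$ small, let $u(\tilde s)$ be the smooth function with $c_1(u(\tilde s),-\tilde s^2)=0$ and $u(\tilde s)=\tilde s/d_{20}+O(\tilde s^2)$, so that $f(\cdot,\cdot,-\tilde s^2)$ has a cuspidal cross cap at $(u(\tilde s),0)$. Then the bias $r_b$ and the secondary cuspidal curvature $r_c$ of $f(\cdot,\cdot,-\tilde s^2)$ at $(u(\tilde s),0)$ have the expansions $$r_b=6c_2(0,0,0)+\frac{6\big(-2f_{21}(0)(c_0)_u(0,0)+(c_2)_u(0,0,0)\big)}{d_{20}}\tilde s+O_{\tilde s}(2),$$ $$r_c=45\sqrt2\,c_3(0,0,0)+\frac{45\sqrt2\,(c_3)_u(0,0,0)}{d_{20}}\tilde s+O_{\tilde s}(2).$$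
   Context: Let $h:(\mathbb{R}^2,p)\to\mathbb{R}^3$ be a frontal with singular set $\{v=0\}$ near $p=(u_0,0)$. Let $\tilde\eta$ be a vector field such that along $\{v=0\}$: $\tilde\eta h=0$, $\langle h_u,\tilde\eta^2h\rangle=\langle h_u,\tilde\eta^3h\rangle=0$, where $\tilde\eta^k h$ denotes the $k$-fold iterated directional derivative of $h$ along $\tilde\eta$; and let $\ell\in\mathbb{R}$ satisfy $\tilde\eta^3h(p)=\ell\,\tilde\eta^2h(p)$. The bias is $r_b=\dfrac{|h_u|^2\det(h_u,\tilde\eta^2h,\tilde\eta^4h)}{|h_u\times\tilde\eta^2h|^3}$ at $p$, and the secondary cuspidal curvature is $r_c=\dfrac{|h_u|^{5/2}\det(h_u,\tilde\eta^2h,3\tilde\eta^5h-10\ell\,\tilde\eta^4h)}{|h_u\times\tilde\eta^2h|^{7/2}}$ at $p$. $O_{\tilde s}(n)$ denotes terms of degree at least $n$ in $\tilde s$. *)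

From Stdlib Require Import Reals List.
From Coquelicot Require Import Coquelicot.
Open Scope R_scope.
Open Scope list_scope.

Definition smooth1 (g : R -> R) : Prop :=
  forall (n : nat) (x : R), ex_derive (Derive_n g n) x.

Definition pdu (g : R -> R -> R) : R -> R -> R :=
  fun x y => Derive (fun t => g t y) x.
Definition pdv (g : R -> R -> R) : R -> R -> R :=
  fun x y => Derive (fun t => g x t) y.

Fixpoint pd2 (w : list bool) (g : R -> R -> R) : R -> R -> R :=
  match w with
  | nil => g
  | true :: w' => pd2 w' (pdu g)
  | false :: w' => pd2 w' (pdv g)
  end.

Definition smooth2 (g : R -> R -> R) : Prop :=
  forall (w : list bool) (x y : R),
    ex_derive (fun t => pd2 w g t y) x /\
    ex_derive (fun t => pd2 w g x t) y /\
    continuous (fun p : R * R => pd2 w g (fst p) (snd p)) (x, y).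

Inductive var3 := X1 | X2 | X3.

Definition pd3_1 (g : R -> R -> R -> R) : R -> R -> R -> R :=
  fun x y z => Derive (fun t => g t y z) x.
Definition pd3_2 (g : R -> R -> R -> R) : R -> R -> R -> R :=
  fun x y z => Derive (fun t => g x t z) y.
Definition pd3_3 (g : R -> R -> R -> R) : R -> R -> R -> R :=
  fun x y z => Derive (fun t => g x y t) z.

Fixpoint pd3 (w : list var3) (g : R -> R -> R -> R) : R -> R -> R -> R :=
  match w with
  | nil => g
  | X1 :: w' => pd3 w' (pd3_1 g)
  | X2 :: w' => pd3 w' (pd3_2 g)
  | X3 :: w' => pd3 w' (pd3_3 g)
  end.

Definition smooth3 (g : R -> R -> R -> R) : Prop :=
  forall (w : list var3) (x y z : R),
    ex_derive (fun t => pd3 w g t y z) x /\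
    ex_derive (fun t => pd3 w g x t z) y /\
    ex_derive (fun t => pd3 w g x y t) z /\
    continuous (fun p : R * R * R => pd3 w g (fst (fst p)) (snd (fst p)) (snd p))
      (x, y, z).

Definition V3 : Type := (R * R * R)%type.
Definition v1 (a : V3) : R := fst (fst a).
Definition v2 (a : V3) : R := snd (fst a).
Definition v3 (a : V3) : R := snd a.
Definition mkV (x y z : R) : V3 := (x, y, z).

Definition vzero : V3 := mkV 0 0 0.
Definition vscale (c : R) (a : V3) : V3 := mkV (c * v1 a) (c * v2 a) (c * v3 a).
Definition vsub (a b : V3) : V3 := mkV (v1 a - v1 b) (v2 a - v2 b) (v3 a - v3 b).
Definition dot (a b : V3) : R := v1 a * v1 b + v2 a * v2 b + v3 a * v3 b.
Definition cross (a b : V3) : V3 :=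
  mkV (v2 a * v3 b - v3 a * v2 b)
      (v3 a * v1 b - v1 a * v3 b)
      (v1 a * v2 b - v2 a * v1 b).
Definition det3 (a b c : V3) : R := dot a (cross b c).
Definition vnorm (a : V3) : R := sqrt (dot a a).

Definition map_u (h : R -> R -> V3) : R -> R -> V3 :=
  fun x y => mkV (pdu (fun x y => v1 (h x y)) x y)
                 (pdu (fun x y => v2 (h x y)) x y)
                 (pdu (fun x y => v3 (h x y)) x y).

Definition dirD (a b : R -> R -> R) (g : R -> R -> R) : R -> R -> R :=
  fun x y => a x y * pdu g x y + b x y * pdv g x y.

Definition dirDmap (a b : R -> R -> R) (h : R -> R -> V3) : R -> R -> V3 :=
  fun x y => mkV (dirD a b (fun x y => v1 (h x y)) x y)
                 (dirD a b (fun x y => v2 (h x y)) x y)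
                 (dirD a b (fun x y => v3 (h x y)) x y).

Fixpoint etaPow (a b : R -> R -> R) (k : nat) (h : R -> R -> V3) : R -> R -> V3 :=
  match k with
  | O => h
  | S k' => dirDmap a b (etaPow a b k' h)
  end.

(** The vector field eta = a d/du + b d/dv is admissible for h at p = (u0,0)
    (singular set {v = 0}): along {v=0} near p we have eta h = 0,
    <h_u, eta^2 h> = <h_u, eta^3 h> = 0; moreover eta is smooth and, at p,
    is a nonzero null vector pointing in the positive d/dv direction
    (orientation convention fixing the sign of r_c). *)
Definition admissible_field (h : R -> R -> V3) (u0 : R) (a b : R -> R -> R) : Prop :=
  smooth2 a /\ smooth2 b /\ 0 < b u0 0 /\
  exists eps : R, 0 < eps /\
    forall x : R, Rabs (x - u0) < eps ->
      etaPow a b 1 h x 0 = vzero /\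
      dot (map_u h x 0) (etaPow a b 2 h x 0) = 0 /\
      dot (map_u h x 0) (etaPow a b 3 h x 0) = 0.

Definition bias (h : R -> R -> V3) (a b : R -> R -> R) (u0 : R) : R :=
  let hu := map_u h u0 0 in
  let e2 := etaPow a b 2 h u0 0 in
  let e4 := etaPow a b 4 h u0 0 in
  (vnorm hu) ^ 2 * det3 hu e2 e4 / (vnorm (cross hu e2)) ^ 3.

(** secondary cuspidal curvature r_c at p = (u0, 0); |x|^(5/2) = (sqrt |x|)^5 *)
Definition sec_cusp_curv (h : R -> R -> V3) (a b : R -> R -> R) (l u0 : R) : R :=
  let hu := map_u h u0 0 in
  let e2 := etaPow a b 2 h u0 0 in
  let e4 := etaPow a b 4 h u0 0 in
  let e5 := etaPow a b 5 h u0 0 in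
  (sqrt (vnorm hu)) ^ 5 * det3 hu e2 (vsub (vscale 3 e5) (vscale (10 * l) e4))
    / (sqrt (vnorm (cross hu e2))) ^ 7.

Definition c1_of (d1 d2 d3 : R -> R) (d4 : R -> R -> R) : R -> R -> R :=
  fun u s => s + u * s * d1 s + u ^ 2 * d2 s + u ^ 3 * d3 s + u ^ 4 * d4 u s.

Definition f32_of (c0 c1 : R -> R -> R) (c2 c3 : R -> R -> R -> R) : R -> R -> R -> R :=
  fun u v s => c0 u s + v * c1 u s + v ^ 2 * c2 u (v ^ 2) s + v ^ 3 * c3 u (v ^ 2) s.

Definition f_of (f21 f31 : R -> R) (f24 f34 : R -> R -> R) (f32 : R -> R -> R -> R)
  : R -> R -> R -> V3 :=
  fun u v s =>
    mkV u
        (u ^ 2 * f21 u + v ^ 2 + u * s * f24 u s)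
        (u ^ 2 * f31 u + v ^ 2 * f32 u v s + u * s * f34 u s).

(* Along v = 0 the null vector field satisfies a = 0, so at the cuspidal cross cap every
   eta^k h is a polynomial in the v-derivatives of a, b and in the jets of h.  The conditions
   <h_u, eta^2 h> = <h_u, eta^3 h> = 0 and eta^3 h = l eta^2 h give a_v = -b q,
   a_vv = -2 b_v q and l = 3 b_v with q = <h_u, h_vv> / |h_u|^2; then r_b and r_c are explicit
   rational expressions in finitely many jets of the family at (u(s~), -s~^2), each of which
   expands to first order in s~ with remainder O(s~^2).  The eta^k h are obtained by formal
   differentiation of expressions polynomial in u, v with smooth coefficients. *)

From Stdlib Require Import Reals Lra List FunctionalExtensionality.
From Coquelicot Require Import Coquelicot.
Import ListNotations.
Open Scope R_scope.
Arguments pd2 : simpl never.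
Arguments pd3 : simpl never.

Lemma pd2_app w w' g : pd2 (w ++ w') g = pd2 w' (pd2 w g).
Proof.
  revert g; induction w as [|[] w IH]; intros g; [reflexivity| |];
    cbn [app]; unfold pd2 at 1 3; fold pd2; apply IH.
Qed.

Lemma pd2_snoc w bu g : pd2 (w ++ [bu]) g = (if bu then pdu else pdv) (pd2 w g).
Proof. rewrite pd2_app; destruct bu; reflexivity. Qed.

Lemma pd3_app w w' c : pd3 (w ++ w') c = pd3 w' (pd3 w c).
Proof.
  revert c; induction w as [|[] w IH]; intros c; [reflexivity| | |];
    cbn [app]; unfold pd3 at 1 3; fold pd3; apply IH.
Qed.

Lemma pd3_snoc w i c :
  pd3 (w ++ [i]) c = match i with X1 => pd3_1 | X2 => pd3_2 | X3 => pd3_3 end (pd3 w c).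
Proof. rewrite pd3_app; destruct i; reflexivity. Qed.

Lemma is_derive_cst (r x : R) : is_derive (fun _ : R => r) x 0.
Proof. exact (is_derive_const (K := R_AbsRing) (V := R_NormedModule) r x). Qed.

Lemma is_derive_transport (f g : R -> R) (x a b : R) :
  (forall t, f t = g t) -> a = b -> is_derive f x a -> is_derive g x b.
Proof. intros Efg <- H; exact (is_derive_ext f g x a Efg H). Qed.

Lemma forallb_repeat (w : list bool) :
  forallb (fun bu => bu) w = true -> w = repeat true (length w).
Proof.
  induction w as [|[] w IH]; simpl; [reflexivity| |discriminate].
  intros H; rewrite <- IH; auto.
Qed.

Lemma pd2_u_vanish (g : R -> R -> R) (u0 eps : R) :
  (forall x, Rabs (x - u0) < eps -> g x 0 = 0) ->
  forall n x, Rabs (x - u0) < eps -> pd2 (repeat true n) g x 0 = 0.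
Proof.
  intros Hg n; induction n as [|n IH]; intros x Hx; [exact (Hg x Hx)|].
  cbn [repeat]; rewrite repeat_cons, pd2_snoc; unfold pdu.
  rewrite (Derive_ext_loc _ (fun _ => 0)); [apply Derive_const|].
  assert (He : 0 < eps - Rabs (x - u0)) by lra.
  exists (mkposreal _ He); intros t Ht; change (Rabs (t - x) < eps - Rabs (x - u0)) in Ht.
  apply IH; pose proof (Rabs_triang (t - x) (x - u0)).
  replace (t - x + (x - u0)) with (t - u0) in * by ring; lra.
Qed.

(** * Formal partial derivatives *)

Definition partials_exist (g : R -> R -> R) : Prop :=
  forall w x y, ex_derive (fun t => pd2 w g t y) x /\ ex_derive (fun t => pd2 w g x t) y.

Lemma smooth2_partials_exist g : smooth2 g -> partials_exist g.
Proof. intros H w x y; destruct (H w x y) as [? [? _]]; auto. Qed.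

Inductive atom : Type :=
| Jet (k : nat) (w : list bool)
| Der (f : R -> R) (n : nat)
| Par2 (g : R -> R -> R) (w : list bool)
| Par3 (c : R -> R -> R -> R) (w : list var3)
| Cst (r : R).

(* [(n, i, j, l)] stands for [n u^i v^j] times the product of the atoms in [l]. *)
Definition monomial : Type := (nat * nat * nat * list atom)%type.

Section Evaluation.
Variables (env : nat -> R -> R -> R) (s : R).

(* [Par3] atoms encode the coefficients [c2 u (v^2) s], [c3 u (v^2) s] of the family. *)
Definition eval_atom (t : atom) (x y : R) : R :=
  match t with
  | Jet k w => pd2 w (env k) x y
  | Der f n => Derive_n f n x
  | Par2 g w => pd2 w g x s
  | Par3 c w => pd3 w c x (y * y) s
  | Cst r => r
  end.

Fixpoint eval_atoms (l : list atom) (x y : R) : R :=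
  match l with [] => 1 | t :: l' => eval_atom t x y * eval_atoms l' x y end.

Definition eval_monomial (m : monomial) (x y : R) : R :=
  let '(n, i, j, l) := m in INR n * x ^ i * y ^ j * eval_atoms l x y.

Fixpoint eval_poly (p : list monomial) (x y : R) : R :=
  match p with [] => 0 | m :: p' => eval_monomial m x y + eval_poly p' x y end.

Definition atom_ok (t : atom) : Prop :=
  match t with
  | Jet k _ => partials_exist (env k)
  | Der f _ => smooth1 f
  | Par2 g _ => smooth2 g
  | Par3 c _ => smooth3 c
  | Cst _ => True
  end.

Definition poly_ok (p : list monomial) : Prop := forall m, In m p -> List.Forall atom_ok (snd m).

Lemma eval_poly_app p q x y : eval_poly (p ++ q) x y = eval_poly p x y + eval_poly q x y.
Proof. induction p as [|m p IH]; simpl; [ring| rewrite IH; ring]. Qed.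

End Evaluation.

(* The derivative of an atom is [n v^j] times a new atom. *)
Definition datom_u (t : atom) : option (nat * nat * atom) :=
  match t with
  | Jet k w => Some (1%nat, 0%nat, Jet k (w ++ [true]))
  | Der f n => Some (1%nat, 0%nat, Der f (S n))
  | Par2 g w => Some (1%nat, 0%nat, Par2 g (w ++ [true]))
  | Par3 c w => Some (1%nat, 0%nat, Par3 c (w ++ [X1]))
  | Cst _ => None
  end.

Definition datom_v (t : atom) : option (nat * nat * atom) :=
  match t with
  | Jet k w => Some (1%nat, 0%nat, Jet k (w ++ [false]))
  | Par3 c w => Some (2%nat, 1%nat, Par3 c (w ++ [X2]))
  | _ => None
  end.

(* Leibniz rule; each term is [n v^j] times a product of atoms. *)
Fixpoint datoms (d : atom -> option (nat * nat * atom)) (l : list atom)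
  : list (nat * nat * list atom) :=
  match l with
  | [] => []
  | t :: l' =>
    match d t with None => [] | Some (n, j, t') => [(n, j, t' :: l')] end
    ++ map (fun '(n, j, l'') => (n, j, t :: l'')) (datoms d l')
  end.

Definition dmonomial (d : atom -> option (nat * nat * atom)) (in_u : bool) (m : monomial)
  : list monomial :=
  let '(n, i, j, l) := m in
  (if in_u then match i with O => [] | S i' => [((n * i)%nat, i', j, l)] end
   else match j with O => [] | S j' => [((n * j)%nat, i, j', l)] end)
  ++ map (fun '(n', j', l') => ((n * n')%nat, i, (j + j')%nat, l')) (datoms d l).

Definition dpoly_u (p : list monomial) : list monomial := flat_map (dmonomial datom_u true) p.
Definition dpoly_v (p : list monomial) : list monomial := flat_map (dmonomial datom_v false) p.

Fixpoint dpoly (w : list bool) (p : list monomial) : list monomial :=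
  match w with
  | [] => p
  | true :: w' => dpoly w' (dpoly_u p)
  | false :: w' => dpoly w' (dpoly_v p)
  end.

Section Soundness.
Variables (env : nat -> R -> R -> R) (s : R).

Local Notation eval_atom := (eval_atom env s).
Local Notation eval_atoms := (eval_atoms env s).
Local Notation eval_poly := (eval_poly env s).
Local Notation atom_ok := (atom_ok env).
Local Notation poly_ok := (poly_ok env).

Definition eval_datom (d : atom -> option (nat * nat * atom)) (t : atom) (x y : R) : R :=
  match d t with None => 0 | Some (n, j, t') => INR n * y ^ j * eval_atom t' x y end.

Lemma is_derive_atom_u t (x y : R) :
  atom_ok t -> is_derive (fun x' => eval_atom t x' y) x (eval_datom datom_u t x y).
Proof.
  unfold eval_datom; destruct t; cbn [datom_u eval_atom]; intros H;
    [refine (is_derive_transport _ _ _ _ _ (fun _ => eq_refl) _ (Derive_correct _ _ _))..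
    | apply is_derive_cst];
    rewrite ?pd2_snoc, ?pd3_snoc; simpl; unfold pdu, pd3_1; try (ring_simplify; reflexivity).
  - exact (proj1 (H w x y)).
  - exact (H n x).
  - exact (proj1 (H w x s)).
  - exact (proj1 (H w x (y * y) s)).
Qed.

Lemma is_derive_atom_v t (x y : R) :
  atom_ok t -> is_derive (fun y' => eval_atom t x y') y (eval_datom datom_v t x y).
Proof.
  unfold eval_datom; destruct t; cbn [datom_v eval_atom]; intros H; try apply is_derive_cst.
  - refine (is_derive_transport _ _ _ _ _ (fun _ => eq_refl) _ (Derive_correct _ _ _)).
    + rewrite pd2_snoc; simpl; unfold pdv; ring.
    + exact (proj2 (H w x y)).
  - assert (Hsq : is_derive (fun y' => y' * y') y (2 * y)).
    { apply (is_derive_transport (fun y' => y' ^ 2) _ _ (INR 2 * 1 * y ^ 1));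
        [intros; ring| simpl; ring|].
      apply is_derive_pow, (is_derive_id (K := R_AbsRing)). }
    refine (is_derive_transport _ _ _ _ _ (fun _ => eq_refl) _
      (is_derive_comp (fun z => pd3 w c x z s) (fun y' => y' * y') y _ _
         (Derive_correct _ _ (proj1 (proj2 (H w x (y * y) s)))) Hsq)).
    rewrite pd3_snoc; unfold pd3_2, scal; simpl; unfold mult; simpl; ring.
Qed.

Fixpoint eval_dterms (L : list (nat * nat * list atom)) (x y : R) : R :=
  match L with
  | [] => 0
  | (n, j, l) :: L' => INR n * y ^ j * eval_atoms l x y + eval_dterms L' x y
  end.

Lemma eval_dterms_app L L' x y : eval_dterms (L ++ L') x y = eval_dterms L x y + eval_dterms L' x y.
Proof. induction L as [|[[n j] l] L IH]; simpl; [ring| rewrite IH; ring]. Qed.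

Lemma eval_dterms_cons t L x y :
  eval_dterms (map (fun '(n, j, l) => (n, j, t :: l)) L) x y = eval_atom t x y * eval_dterms L x y.
Proof. induction L as [|[[n j] l] L IH]; simpl; [ring| rewrite IH; ring]. Qed.

Lemma eval_dterms_head d t l x y :
  eval_dterms (match d t with None => [] | Some (n, j, t') => [(n, j, t' :: l)] end) x y
  = eval_datom d t x y * eval_atoms l x y.
Proof. unfold eval_datom; destruct (d t) as [[[n j] t']|]; simpl; ring. Qed.

Lemma is_derive_atoms_u l (x y : R) : List.Forall atom_ok l ->
  is_derive (fun x' => eval_atoms l x' y) x (eval_dterms (datoms datom_u l) x y).
Proof.
  induction 1 as [|t l Ht Hl IH]; simpl; [apply is_derive_cst|].
  rewrite eval_dterms_app, eval_dterms_head, eval_dterms_cons.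
  exact (Derive.is_derive_mult _ _ x _ _ (is_derive_atom_u t x y Ht) IH).
Qed.

Lemma is_derive_atoms_v l (x y : R) : List.Forall atom_ok l ->
  is_derive (fun y' => eval_atoms l x y') y (eval_dterms (datoms datom_v l) x y).
Proof.
  induction 1 as [|t l Ht Hl IH]; simpl; [apply is_derive_cst|].
  rewrite eval_dterms_app, eval_dterms_head, eval_dterms_cons.
  exact (Derive.is_derive_mult _ _ y _ _ (is_derive_atom_v t x y Ht) IH).
Qed.

Lemma eval_poly_dterms n i j L x y :
  eval_poly (map (fun '(n', j', l') => ((n * n')%nat, i, (j + j')%nat, l')) L) x y
  = INR n * x ^ i * y ^ j * eval_dterms L x y.
Proof.
  induction L as [|[[n' j'] l] L IH]; simpl; [ring|].
  rewrite IH, mult_INR, pow_add; ring.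
Qed.

Lemma is_derive_monomial_u m (x y : R) : List.Forall atom_ok (snd m) ->
  is_derive (fun x' => eval_monomial env s m x' y) x (eval_poly (dmonomial datom_u true m) x y).
Proof.
  destruct m as [[[n i] j] l]; simpl; intros Hl.
  rewrite eval_poly_app, eval_poly_dterms.
  apply (is_derive_atoms_u l x y),
    (Derive.is_derive_mult (fun x' => x' ^ i) _ x _ _
       (is_derive_pow _ i x _ (is_derive_id (K := R_AbsRing) x))),
    (is_derive_scal _ x (INR n * y ^ j)) in Hl.
  refine (is_derive_transport _ _ _ _ _ _ _ Hl); [intros; ring|].
  change (@one R_AbsRing) with 1.
  destruct i as [|i]; cbn [Init.Nat.pred pow eval_poly eval_monomial]; [simpl; ring|].
  rewrite mult_INR; ring.
Qed.

Lemma is_derive_monomial_v m (x y : R) : List.Forall atom_ok (snd m) ->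
  is_derive (fun y' => eval_monomial env s m x y') y (eval_poly (dmonomial datom_v false m) x y).
Proof.
  destruct m as [[[n i] j] l]; simpl; intros Hl.
  rewrite eval_poly_app, eval_poly_dterms.
  apply (is_derive_atoms_v l x y),
    (Derive.is_derive_mult (fun y' => y' ^ j) _ y _ _
       (is_derive_pow _ j y _ (is_derive_id (K := R_AbsRing) y))),
    (is_derive_scal _ y (INR n * x ^ i)) in Hl.
  refine (is_derive_transport _ _ _ _ _ _ _ Hl); [intros; ring|].
  change (@one R_AbsRing) with 1.
  destruct j as [|j]; cbn [Init.Nat.pred pow eval_poly eval_monomial]; [simpl; ring|].
  rewrite mult_INR; ring.
Qed.

Lemma is_derive_poly_u p (x y : R) : poly_ok p ->
  is_derive (fun x' => eval_poly p x' y) x (eval_poly (dpoly_u p) x y).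
Proof.
  unfold dpoly_u; induction p as [|m p IH]; simpl; intros Hp; [apply is_derive_cst|].
  rewrite eval_poly_app; apply (is_derive_plus (fun x' => eval_monomial env s m x' y)).
  - apply is_derive_monomial_u, Hp; left; reflexivity.
  - apply IH; intros m' Hm'; apply Hp; right; exact Hm'.
Qed.

Lemma is_derive_poly_v p (x y : R) : poly_ok p ->
  is_derive (fun y' => eval_poly p x y') y (eval_poly (dpoly_v p) x y).
Proof.
  unfold dpoly_v; induction p as [|m p IH]; simpl; intros Hp; [apply is_derive_cst|].
  rewrite eval_poly_app; apply (is_derive_plus (fun y' => eval_monomial env s m x y')).
  - apply is_derive_monomial_v, Hp; left; reflexivity.
  - apply IH; intros m' Hm'; apply Hp; right; exact Hm'.
Qed.

Section Preservation.
Variable d : atom -> option (nat * nat * atom).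
Hypothesis d_ok : forall t n j t', atom_ok t -> d t = Some (n, j, t') -> atom_ok t'.

Lemma datoms_ok l : List.Forall atom_ok l ->
  forall L, In L (datoms d l) -> List.Forall atom_ok (snd L).
Proof.
  induction 1 as [|t l Ht Hl IH]; simpl; [contradiction|]; intros L HL.
  apply in_app_or in HL as [HL|HL].
  - destruct (d t) as [[[n j] t']|] eqn:E; simpl in HL; [|contradiction].
    destruct HL as [<-|[]]; constructor; eauto.
  - apply in_map_iff in HL as [[[n j] l''] [<- HL]]; constructor; auto; apply (IH _ HL).
Qed.

Lemma dmonomial_ok in_u m : List.Forall atom_ok (snd m) ->
  poly_ok (dmonomial d in_u m).
Proof.
  destruct m as [[[n i] j] l]; simpl; intros Hl m' Hm'.
  apply in_app_or in Hm' as [Hm'|Hm'].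
  - destruct in_u, i, j; simpl in Hm'; try contradiction; destruct Hm' as [<-|[]]; exact Hl.
  - apply in_map_iff in Hm' as [[[n' j'] l'] [<- HL]]; apply (datoms_ok l Hl _ HL).
Qed.

Lemma flat_map_dmonomial_ok in_u p : poly_ok p -> poly_ok (flat_map (dmonomial d in_u) p).
Proof.
  intros Hp m Hm; apply in_flat_map in Hm as [m0 [Hm0 Hm]].
  exact (dmonomial_ok in_u m0 (Hp m0 Hm0) m Hm).
Qed.

End Preservation.

Lemma datom_u_ok t n j t' : atom_ok t -> datom_u t = Some (n, j, t') -> atom_ok t'.
Proof. destruct t; simpl; intros H E; inversion E; subst; exact H. Qed.

Lemma datom_v_ok t n j t' : atom_ok t -> datom_v t = Some (n, j, t') -> atom_ok t'.
Proof. destruct t; simpl; intros H E; inversion E; subst; exact H. Qed.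

Lemma dpoly_u_ok p : poly_ok p -> poly_ok (dpoly_u p).
Proof. exact (flat_map_dmonomial_ok datom_u datom_u_ok true p). Qed.

Lemma dpoly_v_ok p : poly_ok p -> poly_ok (dpoly_v p).
Proof. exact (flat_map_dmonomial_ok datom_v datom_v_ok false p). Qed.

Lemma pdu_eval_poly p : poly_ok p ->
  pdu (eval_poly p) = eval_poly (dpoly_u p).
Proof.
  intros Hp; extensionality x; extensionality y.
  apply is_derive_unique, is_derive_poly_u, Hp.
Qed.

Lemma pdv_eval_poly p : poly_ok p ->
  pdv (eval_poly p) = eval_poly (dpoly_v p).
Proof.
  intros Hp; extensionality x; extensionality y.
  apply is_derive_unique, is_derive_poly_v, Hp.
Qed.

Lemma pd2_eval_poly w : forall p, poly_ok p ->
  pd2 w (eval_poly p) = eval_poly (dpoly w p) /\ poly_ok (dpoly w p).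
Proof.
  induction w as [|[] w IH]; intros p Hp; [split; auto| |];
    unfold pd2; fold pd2; simpl.
  - rewrite pdu_eval_poly by exact Hp; apply IH, dpoly_u_ok, Hp.
  - rewrite pdv_eval_poly by exact Hp; apply IH, dpoly_v_ok, Hp.
Qed.

Lemma eval_poly_partials_exist p : poly_ok p -> partials_exist (eval_poly p).
Proof.
  intros Hp w x y; destruct (pd2_eval_poly w p Hp) as [-> Hw]; split; eexists.
  - apply is_derive_poly_u, Hw.
  - apply is_derive_poly_v, Hw.
Qed.

End Soundness.

(** * The vector field [a d/du + b d/dv] acting on formal expressions *)

Definition eta_env (a b : R -> R -> R) (g : nat -> R -> R -> R) (k : nat) : R -> R -> R :=
  match k with O => a | 1%nat => b | S (S i) => g i end.

Definition mul_atom (t : atom) (m : monomial) : monomial :=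
  let '(n, i, j, l) := m in (n, i, j, t :: l).

Definition eta_poly (p : list monomial) : list monomial :=
  map (mul_atom (Jet 0 [])) (dpoly_u p) ++ map (mul_atom (Jet 1 [])) (dpoly_v p).

Section Eta.
Variables (a b : R -> R -> R) (g : nat -> R -> R -> R) (s : R).
Hypotheses (Ha : partials_exist a) (Hb : partials_exist b).
Local Notation env := (eta_env a b g).

Lemma eval_poly_mul_atom t p x y :
  eval_poly env s (map (mul_atom t) p) x y = eval_atom env s t x y * eval_poly env s p x y.
Proof. induction p as [|[[[n i] j] l] p IH]; simpl; [ring| rewrite IH; ring]. Qed.

Lemma mul_atom_ok t p : atom_ok env t -> poly_ok env p -> poly_ok env (map (mul_atom t) p).
Proof.
  intros Ht Hp m Hm; apply in_map_iff in Hm as [[[[n i] j] l] [<- Hm]].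
  constructor; [exact Ht| exact (Hp _ Hm)].
Qed.

Lemma eta_poly_ok p : poly_ok env p -> poly_ok env (eta_poly p).
Proof.
  intros Hp m Hm; apply in_app_or in Hm as [Hm|Hm]; revert m Hm; apply mul_atom_ok;
    auto using dpoly_u_ok, dpoly_v_ok.
Qed.

Lemma iter_eta_poly_ok k p : poly_ok env p -> poly_ok env (Nat.iter k eta_poly p).
Proof. intros Hp; induction k; simpl; auto using eta_poly_ok. Qed.

Lemma dirD_eval_poly p : poly_ok env p ->
  dirD a b (eval_poly env s p) = eval_poly env s (eta_poly p).
Proof.
  intros Hp; extensionality x; extensionality y; unfold dirD, eta_poly.
  rewrite eval_poly_app, !eval_poly_mul_atom, pdu_eval_poly, pdv_eval_poly by exact Hp.
  reflexivity.
Qed.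

Lemma etaPow_eval_poly (h : R -> R -> V3) p1 p2 p3 :
  poly_ok env p1 -> poly_ok env p2 -> poly_ok env p3 ->
  h = (fun x y => mkV (eval_poly env s p1 x y) (eval_poly env s p2 x y) (eval_poly env s p3 x y)) ->
  forall k, etaPow a b k h = fun x y =>
    mkV (eval_poly env s (Nat.iter k eta_poly p1) x y)
        (eval_poly env s (Nat.iter k eta_poly p2) x y)
        (eval_poly env s (Nat.iter k eta_poly p3) x y).
Proof.
  intros H1 H2 H3 -> k; induction k as [|k IH]; [reflexivity|].
  cbn [etaPow]; rewrite IH; unfold dirDmap; cbn [v1 v2 v3 mkV fst snd Nat.iter].
  rewrite !(dirD_eval_poly (Nat.iter k eta_poly _)) by auto using iter_eta_poly_ok.
  reflexivity.
Qed.

End Eta.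

Section Pruning.
Variables (env : nat -> R -> R -> R) (s : R).

Definition v_free (m : monomial) : bool := match m with (_, _, O, _) => true | _ => false end.

Lemma eval_poly_v0 p x : eval_poly env s p x 0 = eval_poly env s (filter v_free p) x 0.
Proof.
  induction p as [|[[[n i] [|j]] l] p IH]; simpl; rewrite ?IH; [reflexivity| reflexivity| ring].
Qed.

Lemma eval_poly_prune (z : atom -> bool) p x y :
  (forall t, z t = true -> eval_atom env s t x y = 0) ->
  eval_poly env s p x y = eval_poly env s (filter (fun m => negb (existsb z (snd m))) p) x y.
Proof.
  intros Hz.
  assert (Hl : forall l, existsb z l = true -> eval_atoms env s l x y = 0).
  { induction l as [|t l IH]; simpl; [discriminate|].
    intros [E|E]%Bool.orb_true_iff; [rewrite (Hz t E)| rewrite (IH E)]; ring. }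
  induction p as [|[[[n i] j] l] p IH]; simpl; [reflexivity|].
  destruct (existsb z l) eqn:E; simpl; rewrite IH; [rewrite (Hl l E)|]; ring.
Qed.

End Pruning.

(** * The family at a fixed parameter and its jets *)

Definition vcomp (i : nat) (p : V3) : R :=
  match i with O => v1 p | 1%nat => v2 p | _ => v3 p end.

Section Family.
Variables (f21 f31 d1 d2 d3 : R -> R) (f24 f34 c0 d4 : R -> R -> R)
  (c2 c3 : R -> R -> R -> R) (s : R).
Hypotheses (Sf21 : smooth1 f21) (Sf31 : smooth1 f31) (Sf24 : smooth2 f24) (Sf34 : smooth2 f34)
  (Sc0 : smooth2 c0) (Sd4 : smooth2 d4) (Sc2 : smooth3 c2) (Sc3 : smooth3 c3).

Definition fam : R -> R -> V3 :=
  fun u v => f_of f21 f31 f24 f34 (f32_of c0 (c1_of d1 d2 d3 d4) c2 c3) u v s.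

Definition fam_comp (i : nat) : R -> R -> R := fun u v => vcomp i (fam u v).

Definition fam_poly (i : nat) : list monomial :=
  match i with
  | O => [(1, 1, 0, [])]
  | 1 => [(1, 2, 0, [Der f21 0]); (1, 0, 2, []); (1, 1, 0, [Cst s; Par2 f24 []])]
  | _ => [(1, 2, 0, [Der f31 0]); (1, 0, 2, [Par2 c0 []]);
          (1, 0, 3, [Cst s]); (1, 1, 3, [Cst s; Cst (d1 s)]); (1, 2, 3, [Cst (d2 s)]);
          (1, 3, 3, [Cst (d3 s)]); (1, 4, 3, [Par2 d4 []]); (1, 0, 4, [Par3 c2 []]);
          (1, 0, 5, [Par3 c3 []]); (1, 1, 0, [Cst s; Par2 f34 []])]
  end%nat.

Definition no_jets : nat -> R -> R -> R := fun _ _ _ => 0.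

Lemma fam_comp_poly i : fam_comp i = eval_poly no_jets s (fam_poly i).
Proof.
  extensionality x; extensionality y.
  unfold fam_comp, fam, f_of, f32_of, c1_of, fam_poly.
  destruct i as [|[|i]]; cbn [vcomp v1 v2 v3 mkV fst snd eval_poly eval_monomial eval_atoms
    eval_atom INR Derive_n]; unfold pd2, pd3;
    replace (y ^ 2) with (y * y) by ring; ring.
Qed.

Lemma fam_poly_ok i : poly_ok no_jets (fam_poly i).
Proof.
  intros m Hm; destruct i as [|[|i]]; simpl in Hm;
    repeat (destruct Hm as [<-|Hm];
      [simpl; repeat (apply List.Forall_cons; [simpl; auto|]); apply List.Forall_nil|]);
    contradiction.
Qed.

Lemma pd2_fam_comp i w : pd2 w (fam_comp i) = eval_poly no_jets s (dpoly w (fam_poly i)).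
Proof. rewrite fam_comp_poly; apply pd2_eval_poly, fam_poly_ok. Qed.

Lemma fam_comp_partials_exist i : partials_exist (fam_comp i).
Proof. rewrite fam_comp_poly; apply eval_poly_partials_exist, fam_poly_ok. Qed.

Lemma etaPow1_fam_v1 (a b : R -> R -> R) (x : R) : v1 (etaPow a b 1 fam x 0) = a x 0.
Proof.
  cbn [etaPow]; unfold dirDmap, dirD; cbn [v1 mkV fst snd].
  change (pdu (fun x y => v1 (fam x y))) with (pd2 [true] (fam_comp 0)).
  change (pdv (fun x y => v1 (fam x y))) with (pd2 [false] (fam_comp 0)).
  rewrite !pd2_fam_comp.
  cbv [fam_poly dpoly dpoly_u dpoly_v flat_map dmonomial datoms datom_u datom_v app map
       Nat.mul Nat.add].
  cbn [eval_poly eval_monomial eval_atoms INR pow]; ring.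
Qed.

Variable u0 : R.

(* [jet i p q] is d^q/dv^q d^p/du^p of the [i]-th component at [(u0, 0)]; in lemma names the
   components are called [x], [y], [z]. *)
Definition jet (i p q : nat) : R := pd2 (repeat true p ++ repeat false q) (fam_comp i) u0 0.

Lemma jet_eval_word i w :
  pd2 w (fam_comp i) u0 0 = eval_poly no_jets s (filter v_free (dpoly w (fam_poly i))) u0 0.
Proof. rewrite pd2_fam_comp, eval_poly_v0; reflexivity. Qed.

Ltac compute_jet :=
  rewrite ?jet_eval_word; unfold jet; rewrite ?jet_eval_word;
  cbv [fam_poly dpoly dpoly_u dpoly_v flat_map dmonomial datoms datom_u datom_v app map
       filter v_free repeat Nat.mul Nat.add];
  cbn [eval_poly eval_monomial eval_atoms eval_atom INR pow]; cbv [pd2 pd3];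
  repeat match goal with |- context [Derive_n ?f 0 ?x] => change (Derive_n f 0 x) with (f x) end;
  rewrite ?(Rmult_0_l 0); ring.

Lemma jet_x_u : jet 0 1 0 = 1.
Proof. compute_jet. Qed.
Lemma jet_y_vv : jet 1 0 2 = 2.
Proof. compute_jet. Qed.
Lemma jet_y_u :
  jet 1 1 0 = 2 * u0 * f21 u0 + u0 ^ 2 * Derive_n f21 1 u0 + s * f24 u0 s + u0 * s * pdu f24 u0 s.
Proof. compute_jet. Qed.
Lemma jet_y_uu : jet 1 2 0 = 2 * f21 u0 + 4 * u0 * Derive_n f21 1 u0 + u0 ^ 2 * Derive_n f21 2 u0
  + 2 * s * pdu f24 u0 s + u0 * s * pdu (pdu f24) u0 s.
Proof. compute_jet. Qed.
Lemma jet_z_u :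
  jet 2 1 0 = 2 * u0 * f31 u0 + u0 ^ 2 * Derive_n f31 1 u0 + s * f34 u0 s + u0 * s * pdu f34 u0 s.
Proof. compute_jet. Qed.
Lemma jet_z_uu : jet 2 2 0 = 2 * f31 u0 + 4 * u0 * Derive_n f31 1 u0 + u0 ^ 2 * Derive_n f31 2 u0
  + 2 * s * pdu f34 u0 s + u0 * s * pdu (pdu f34) u0 s.
Proof. compute_jet. Qed.
Lemma jet_z_vv : jet 2 0 2 = 2 * c0 u0 s.
Proof. compute_jet. Qed.
Lemma jet_z_uvv : jet 2 1 2 = 2 * pdu c0 u0 s.
Proof. compute_jet. Qed.
Lemma jet_z_vvv : jet 2 0 3 = 6 * c1_of d1 d2 d3 d4 u0 s.
Proof. unfold c1_of; compute_jet. Qed.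
Lemma jet_z_uvvv : jet 2 1 3 = 6 * (s * d1 s + 2 * u0 * d2 s + 3 * u0 ^ 2 * d3 s
  + 4 * u0 ^ 3 * d4 u0 s + u0 ^ 4 * pdu d4 u0 s).
Proof. compute_jet. Qed.
Lemma jet_z_vvvv : jet 2 0 4 = 24 * c2 u0 0 s.
Proof. compute_jet. Qed.
Lemma jet_z_vvvvv : jet 2 0 5 = 120 * c3 u0 0 s.
Proof. compute_jet. Qed.

(* Brings every partial derivative of [fam] at [(u0, 0)] to the form [jet i p q]; formal
   derivatives have positive coefficients, so a jet vanishes exactly when its expression at
   [v = 0] is the empty sum. *)
Ltac normalize_jets :=
  repeat match goal with
  | |- context [pd2 ?w (fam_comp ?i) u0 0] =>
      let P := eval cbv [fam_poly dpoly dpoly_u dpoly_v flat_map dmonomial datoms datom_u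
                         datom_v app map filter v_free Nat.mul Nat.add]
               in (filter v_free (dpoly w (fam_poly i))) in
      lazymatch P with
      | [] => replace (pd2 w (fam_comp i) u0 0) with 0
               by (rewrite jet_eval_word;
                   cbv [fam_poly dpoly dpoly_u dpoly_v flat_map dmonomial datoms datom_u
                        datom_v app map filter v_free Nat.mul Nat.add eval_poly];
                   reflexivity)
      | _ =>
          let p := eval compute in (length (filter (fun bu : bool => bu) w)) in
          let q := eval compute in (length (filter negb w)) in
          replace (pd2 w (fam_comp i) u0 0) with (jet i p q) by compute_jet
      end
  end.

Definition hu : V3 := mkV 1 (jet 1 1 0) (jet 2 1 0).
Definition hvv : V3 := mkV 0 2 (jet 2 0 2).
Definition hu_sq : R := dot hu hu.
Definition cross_sq : R := dot (cross hu hvv) (cross hu hvv).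
Definition hvv_coef : R := dot hu hvv / hu_sq.
Definition bias_num : R :=
  2 * (3 * hvv_coef ^ 2 * jet 2 2 0 - 6 * hvv_coef * jet 2 1 2 + jet 2 0 4)
  - jet 2 0 2 * (3 * hvv_coef ^ 2 * jet 1 2 0).
Definition scc_num : R := 2 * (3 * jet 2 0 5 - 30 * hvv_coef * jet 2 1 3).

Ltac unfold_vectors :=
  unfold hvv_coef, hu_sq, cross_sq, det3, dot, cross, hu, hvv, vsub, vscale in *;
  cbn [v1 v2 v3 mkV fst snd] in *.

Lemma hu_sq_pos : 0 < hu_sq.
Proof. unfold_vectors; nra. Qed.

Lemma cross_sq_pos : 0 < cross_sq.
Proof.
  unfold_vectors.
  pose proof (pow2_ge_0 (jet 1 1 0 * jet 2 0 2 - jet 2 1 0 * 2)).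
  pose proof (pow2_ge_0 (jet 2 1 0 * 0 - 1 * jet 2 0 2)); nra.
Qed.

Lemma map_u_fam : map_u fam u0 0 = hu.
Proof. unfold hu; rewrite <- jet_x_u; reflexivity. Qed.

Definition a_u_jet (t : atom) : bool :=
  match t with Jet 0 w => forallb (fun bu => bu) w | _ => false end.

Section Invariants.
Variables (a b : R -> R -> R).
Hypotheses (Ha : partials_exist a) (Hb : partials_exist b).
Hypothesis a_u_vanish : forall n, pd2 (repeat true n) a u0 0 = 0.

Local Notation env := (eta_env a b fam_comp).
Local Notation a_at w := (pd2 w a u0 0).
Local Notation b_at w := (pd2 w b u0 0).
Local Notation eta k := (etaPow a b k fam u0 0).

Definition single_jet (k : nat) : list monomial := [(1, 0, 0, [Jet k []])]%nat.

Lemma single_jet_ok i : poly_ok env (single_jet (2 + i)).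
Proof.
  intros m [<-|[]]; apply List.Forall_cons; [apply fam_comp_partials_exist| apply List.Forall_nil].
Qed.

Lemma fam_eval_poly : fam = fun x y =>
  mkV (eval_poly env 0 (single_jet 2) x y) (eval_poly env 0 (single_jet 3) x y)
      (eval_poly env 0 (single_jet 4) x y).
Proof.
  extensionality x; extensionality y.
  cbn [single_jet eval_poly eval_monomial eval_atoms eval_atom eta_env INR pow]; cbv [pd2].
  unfold fam_comp; destruct (fam x y) as [[p1 p2] p3]; cbn [vcomp v1 v2 v3 mkV fst snd].
  rewrite !Rmult_1_r, !Rmult_1_l, !Rplus_0_r; reflexivity.
Qed.

Definition eta_at (k i : nat) : R :=
  eval_poly env 0 (filter (fun m => negb (existsb a_u_jet (snd m)))
    (Nat.iter k eta_poly (single_jet (2 + i)))) u0 0.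

Lemma etaPow_fam k : eta k = mkV (eta_at k 0) (eta_at k 1) (eta_at k 2).
Proof.
  rewrite (etaPow_eval_poly a b fam_comp 0 Ha Hb fam _ _ _
    (single_jet_ok 0) (single_jet_ok 1) (single_jet_ok 2) fam_eval_poly k).
  unfold eta_at; rewrite <- !eval_poly_prune; [reflexivity|..];
    intros [[|k'] w| | | |] Ht; try discriminate; cbn [eval_atom eta_env];
    rewrite (forallb_repeat w Ht); apply a_u_vanish.
Qed.

Ltac evaluate_eta_at :=
  unfold eta_at;
  cbv [Nat.iter nat_rect eta_poly single_jet dpoly_u dpoly_v flat_map dmonomial datoms datom_u
       datom_v app map mul_atom filter existsb a_u_jet forallb negb orb andb snd Nat.mul Nat.add];
  cbn [eval_poly eval_monomial eval_atoms eval_atom eta_env INR pow];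
  normalize_jets; rewrite ?jet_x_u, ?jet_y_vv.

Ltac expand_eta := rewrite ?etaPow_fam; evaluate_eta_at.

(* The same, one component at a time, which keeps the proof terms of [eta 4], [eta 5] small. *)
Ltac rewrite_eta_component k i :=
  let E := fresh in
  eassert (E : eta_at k i = _); [evaluate_eta_at; reflexivity| rewrite E; clear E].

Lemma a_v_at : dot hu (eta 2) = 0 -> b_at [] <> 0 -> a_at [false] = - b_at [] * hvv_coef.
Proof.
  intros HC Hb0; revert HC; expand_eta; intros HC.
  assert (E : b_at [] * (a_at [false] * hu_sq + b_at [] * dot hu hvv) = 0).
  { etransitivity; [|exact HC]; unfold_vectors; ring. }
  apply Rmult_integral in E as [E|E]; [contradiction|].
  pose proof hu_sq_pos; unfold hvv_coef; field_simplify_eq; lra.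
Qed.

Lemma eta3_ratio (l : R) : eta 3 = vscale l (eta 2) -> 0 < b_at [] -> l = 3 * b_at [false].
Proof.
  intros Hl Hb0.
  assert (E1 := f_equal v1 Hl); assert (E2 := f_equal v2 Hl); clear Hl; revert E1 E2.
  expand_eta; unfold vscale; cbn [v1 v2 v3 mkV fst snd]; intros E1 E2.
  (* scaled by [jet 1 1 0], the first components cancel the [a]-terms of the second ones *)
  apply (f_equal (fun t => t * jet 1 1 0)) in E1.
  assert (E : 2 * b_at [] ^ 2 * (l - 3 * b_at [false]) = 0).
  { ring_simplify in E1; ring_simplify in E2; ring_simplify; lra. }
  apply Rmult_integral in E as [E|E]; [|lra].
  exfalso; apply Rmult_integral in E as [E|E]; [lra|]; apply (pow_nonzero (b_at []) 2); lra.
Qed.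

Lemma a_vv_at : dot hu (eta 2) = 0 -> dot hu (eta 3) = 0 -> 0 < b_at [] -> jet 2 0 3 = 0 ->
  a_at [false; false] = - 2 * b_at [false] * hvv_coef.
Proof.
  intros HC2 HC3 Hb0 Hc1.
  assert (Ha1 := a_v_at HC2 ltac:(lra)); revert HC3; expand_eta; intros HC3.
  assert (E : b_at [] ^ 2 * hu_sq * (a_at [false; false] + 2 * b_at [false] * hvv_coef) = 0).
  { etransitivity; [|exact HC3]; rewrite Hc1, Ha1; pose proof hu_sq_pos; unfold_vectors.
    field; lra. }
  pose proof hu_sq_pos; apply Rmult_integral in E as [E|E]; [|lra].
  exfalso; apply Rmult_integral in E as [E|E]; [|lra]; apply (pow_nonzero (b_at []) 2); lra.
Qed.

Lemma det3_eta2 (X : V3) : dot hu (eta 2) = 0 -> b_at [] <> 0 ->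
  det3 hu (eta 2) X = b_at [] ^ 2 * dot (cross hu hvv) X.
Proof.
  intros HC Hb0; assert (Ha1 := a_v_at HC Hb0).
  expand_eta; rewrite Ha1; unfold_vectors; ring.
Qed.

Lemma det_bias_eq : dot hu (eta 2) = 0 -> 0 < b_at [] -> jet 2 0 3 = 0 ->
  det3 hu (eta 2) (eta 4) = b_at [] ^ 6 * bias_num.
Proof.
  intros HC Hb0 Hc1; assert (Ha1 := a_v_at HC ltac:(lra)).
  rewrite det3_eta2, etaPow_fam by lra.
  rewrite_eta_component 4%nat 0%nat; rewrite_eta_component 4%nat 1%nat;
    rewrite_eta_component 4%nat 2%nat.
  rewrite Hc1, Ha1; pose proof hu_sq_pos; unfold bias_num; unfold_vectors.
  field; lra.
Qed.

Lemma det_scc_eq (l : R) : dot hu (eta 2) = 0 -> dot hu (eta 3) = 0 ->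
  eta 3 = vscale l (eta 2) -> 0 < b_at [] -> jet 2 0 3 = 0 ->
  det3 hu (eta 2) (vsub (vscale 3 (eta 5)) (vscale (10 * l) (eta 4))) = b_at [] ^ 7 * scc_num.
Proof.
  intros HC2 HC3 Hl Hb0 Hc1.
  assert (Ha1 := a_v_at HC2 ltac:(lra)); assert (Ha2 := a_vv_at HC2 HC3 Hb0 Hc1).
  rewrite (eta3_ratio l Hl Hb0), det3_eta2, !etaPow_fam by lra.
  rewrite_eta_component 4%nat 0%nat; rewrite_eta_component 4%nat 1%nat;
    rewrite_eta_component 4%nat 2%nat; rewrite_eta_component 5%nat 0%nat;
    rewrite_eta_component 5%nat 1%nat; rewrite_eta_component 5%nat 2%nat.
  rewrite Hc1, Ha2, Ha1; pose proof hu_sq_pos.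
  unfold scc_num; unfold_vectors; field; lra.
Qed.

Lemma norm_cross_eta2 : 0 < b_at [] -> vnorm (cross hu (eta 2)) = b_at [] ^ 2 * sqrt cross_sq.
Proof.
  intros Hb0; unfold vnorm.
  replace (dot (cross hu (eta 2)) (cross hu (eta 2))) with ((b_at [] ^ 2) ^ 2 * cross_sq).
  - rewrite sqrt_mult_alt, sqrt_pow2 by (repeat apply pow_le; lra); reflexivity.
  - expand_eta; unfold_vectors; ring.
Qed.

Lemma bias_fam : dot hu (eta 2) = 0 -> 0 < b_at [] -> jet 2 0 3 = 0 ->
  bias fam a b u0 = hu_sq * bias_num / sqrt cross_sq ^ 3.
Proof.
  intros HC Hb0 Hc1.
  unfold bias; rewrite map_u_fam, det_bias_eq, norm_cross_eta2 by auto.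
  change (vnorm hu) with (sqrt hu_sq).
  rewrite pow2_sqrt by (pose proof hu_sq_pos; lra).
  assert (0 < sqrt cross_sq) by (apply sqrt_lt_R0, cross_sq_pos).
  field; lra.
Qed.

Lemma sec_cusp_curv_fam (l : R) : dot hu (eta 2) = 0 -> dot hu (eta 3) = 0 ->
  eta 3 = vscale l (eta 2) -> 0 < b_at [] -> jet 2 0 3 = 0 ->
  sec_cusp_curv fam a b l u0 = sqrt (sqrt hu_sq) ^ 5 * scc_num / sqrt (sqrt cross_sq) ^ 7.
Proof.
  intros HC2 HC3 Hl Hb0 Hc1; unfold sec_cusp_curv.
  rewrite map_u_fam, det_scc_eq, norm_cross_eta2 by auto; change (vnorm hu) with (sqrt hu_sq).
  rewrite sqrt_mult_alt, sqrt_pow2 by (try apply pow_le; lra).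
  assert (0 < sqrt (sqrt cross_sq)) by (apply sqrt_lt_R0, sqrt_lt_R0, cross_sq_pos).
  field; lra.
Qed.

End Invariants.

Lemma a_u_jets_vanish (a b : R -> R -> R) (eps : R) : 0 < eps ->
  (forall x, Rabs (x - u0) < eps -> etaPow a b 1 fam x 0 = vzero) ->
  forall n, pd2 (repeat true n) a u0 0 = 0.
Proof.
  intros Heps Heta n; apply (pd2_u_vanish a u0 eps); [|rewrite Rminus_diag, Rabs_R0; exact Heps].
  intros x Hx; rewrite <- (etaPow1_fam_v1 a b x), (Heta x Hx); reflexivity.
Qed.

Lemma invariants_fam (a b : R -> R -> R) (l : R) :
  admissible_field fam u0 a b -> etaPow a b 3 fam u0 0 = vscale l (etaPow a b 2 fam u0 0) ->
  jet 2 0 3 = 0 ->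
  bias fam a b u0 = hu_sq * bias_num / sqrt cross_sq ^ 3 /\
  sec_cusp_curv fam a b l u0 = sqrt (sqrt hu_sq) ^ 5 * scc_num / sqrt (sqrt cross_sq) ^ 7.
Proof.
  intros [Sa [Sb [Hb0 [eps [Heps Heta]]]]] Hl Hc1.
  assert (Ha := a_u_jets_vanish a b eps Heps (fun x Hx => proj1 (Heta x Hx))).
  destruct (Heta u0) as [_ [HC2 HC3]]; [rewrite Rminus_diag, Rabs_R0; exact Heps|].
  rewrite map_u_fam in HC2, HC3; apply smooth2_partials_exist in Sa, Sb.
  split; [apply bias_fam| apply sec_cusp_curv_fam]; assumption.
Qed.

End Family.

(** * First-order expansions in a small parameter *)

Definition expands (F : R -> R) (k0 k1 : R) : Prop :=
  exists C d, 0 < d /\ forall t, Rabs t < d -> Rabs (F t - k0 - k1 * t) <= C * t ^ 2.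

Lemma sqr_abs (t : R) : t ^ 2 = Rabs t * Rabs t.
Proof. rewrite <- Rabs_mult, Rabs_right; [ring| nra]. Qed.

Lemma expands_near F k0 k1 : expands F k0 k1 -> forall eps, 0 < eps ->
  exists C K d, 0 < d /\ 0 <= C /\ 0 <= K /\ forall t, Rabs t < d ->
    Rabs (F t - k0 - k1 * t) <= C * t ^ 2 /\ Rabs (F t - k0) <= K * Rabs t
    /\ Rabs (F t - k0) <= eps.
Proof.
  intros [C [d [Hd HF]]] eps Heps.
  set (K := Rabs k1 + Rabs C).
  assert (HK : 0 <= K) by (unfold K; pose proof (Rabs_pos k1); pose proof (Rabs_pos C); lra).
  exists (Rabs C), K, (Rmin (Rmin d 1) (eps / (K + 1))).
  assert (Hd' : 0 < Rmin (Rmin d 1) (eps / (K + 1)))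
    by (repeat apply Rmin_pos; try apply Rdiv_lt_0_compat; lra).
  split; [exact Hd'|]; split; [apply Rabs_pos|]; split; [exact HK|]; intros t Ht.
  pose proof (Rmin_l (Rmin d 1) (eps / (K + 1))); pose proof (Rmin_r (Rmin d 1) (eps / (K + 1))).
  pose proof (Rmin_l d 1); pose proof (Rmin_r d 1); pose proof (Rabs_pos t).
  assert (E : Rabs (F t - k0 - k1 * t) <= Rabs C * t ^ 2).
  { eapply Rle_trans; [apply HF; lra|]. apply Rmult_le_compat_r; [nra| apply RRle_abs]. }
  assert (L : Rabs (F t - k0) <= K * Rabs t).
  { replace (F t - k0) with ((F t - k0 - k1 * t) + k1 * t) by ring.
    eapply Rle_trans; [apply Rabs_triang|]; rewrite Rabs_mult; rewrite sqr_abs in E.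
    assert (Rabs C * (Rabs t * Rabs t) <= Rabs C * Rabs t)
      by (apply Rmult_le_compat_l; [apply Rabs_pos| nra]).
    unfold K; lra. }
  split; [exact E|]; split; [exact L|].
  assert (Rabs t * (K + 1) <= eps).
  { apply (Rmult_le_reg_r (/ (K + 1))); [apply Rinv_0_lt_compat; lra|].
    rewrite Rmult_assoc, Rinv_r, Rmult_1_r by lra; unfold Rdiv in *; lra. }
  nra.
Qed.

Lemma expands_ext F G k0 k1 : (forall t, F t = G t) -> expands F k0 k1 -> expands G k0 k1.
Proof. intros E [C [d [Hd H]]]; exists C, d; split; auto; intros t Ht; rewrite <- E; auto. Qed.

Lemma expands_eq F k0 k1 k0' k1' : expands F k0 k1 -> k0 = k0' -> k1 = k1' -> expands F k0' k1'.
Proof. intros H <- <-; exact H. Qed.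

Lemma expands_const r : expands (fun _ => r) r 0.
Proof.
  exists 0, 1; split; [lra|]; intros t _.
  replace (r - r - 0 * t) with 0 by ring; rewrite Rabs_R0; nra.
Qed.

Lemma expands_id : expands (fun t => t) 0 1.
Proof.
  exists 0, 1; split; [lra|]; intros t _.
  replace (t - 0 - 1 * t) with 0 by ring; rewrite Rabs_R0; nra.
Qed.

Lemma expands_plus F G a0 a1 b0 b1 : expands F a0 a1 -> expands G b0 b1 ->
  expands (fun t => F t + G t) (a0 + b0) (a1 + b1).
Proof.
  intros [C1 [d1 [H1 HF]]] [C2 [d2 [H2 HG]]].
  exists (C1 + C2), (Rmin d1 d2); split; [apply Rmin_pos; lra|]; intros t Ht.
  pose proof (Rmin_l d1 d2); pose proof (Rmin_r d1 d2).
  replace (F t + G t - (a0 + b0) - (a1 + b1) * t)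
    with ((F t - a0 - a1 * t) + (G t - b0 - b1 * t)) by ring.
  eapply Rle_trans; [apply Rabs_triang|].
  specialize (HF t ltac:(lra)); specialize (HG t ltac:(lra)); nra.
Qed.

Lemma expands_opp F a0 a1 : expands F a0 a1 -> expands (fun t => - F t) (- a0) (- a1).
Proof.
  intros [C [d [Hd H]]]; exists C, d; split; auto; intros t Ht.
  replace (- F t - - a0 - - a1 * t) with (- (F t - a0 - a1 * t)) by ring.
  rewrite Rabs_Ropp; auto.
Qed.

Lemma expands_minus F G a0 a1 b0 b1 : expands F a0 a1 -> expands G b0 b1 ->
  expands (fun t => F t - G t) (a0 - b0) (a1 - b1).
Proof. intros HF HG; exact (expands_plus _ _ _ _ _ _ HF (expands_opp _ _ _ HG)). Qed.

Lemma expands_mult F G a0 a1 b0 b1 : expands F a0 a1 -> expands G b0 b1 ->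
  expands (fun t => F t * G t) (a0 * b0) (a0 * b1 + a1 * b0).
Proof.
  intros HF HG.
  destruct (expands_near _ _ _ HF 1 Rlt_0_1) as [C1 [K1 [d1 [H1 [HC1 [HK1 HF']]]]]].
  destruct (expands_near _ _ _ HG 1 Rlt_0_1) as [C2 [K2 [d2 [H2 [HC2 [HK2 HG']]]]]].
  exists (Rabs a0 * C2 + Rabs b0 * C1 + K1 * K2), (Rmin d1 d2).
  split; [apply Rmin_pos; lra|]; intros t Ht.
  pose proof (Rmin_l d1 d2); pose proof (Rmin_r d1 d2).
  destruct (HF' t ltac:(lra)) as [E1 [L1 _]]; destruct (HG' t ltac:(lra)) as [E2 [L2 _]].
  replace (F t * G t - a0 * b0 - (a0 * b1 + a1 * b0) * t) with
    (a0 * (G t - b0 - b1 * t) + b0 * (F t - a0 - a1 * t) + (F t - a0) * (G t - b0)) by ring.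
  eapply Rle_trans; [apply Rabs_triang|]; eapply Rle_trans;
    [apply Rplus_le_compat_r, Rabs_triang|]; rewrite !Rabs_mult, sqr_abs in *.
  pose proof (Rabs_pos a0); pose proof (Rabs_pos b0); pose proof (Rabs_pos t).
  pose proof (Rabs_pos (F t - a0)); pose proof (Rabs_pos (G t - b0)).
  assert (Rabs (F t - a0) * Rabs (G t - b0) <= K1 * Rabs t * (K2 * Rabs t))
    by (apply Rmult_le_compat; auto).
  nra.
Qed.

Lemma Rabs_div_le N D K m s2 : 0 < m -> 0 <= s2 -> Rabs N <= K * s2 -> m <= Rabs D ->
  Rabs (N / D) <= K / m * s2.
Proof.
  intros Hm Hs HN HD; unfold Rdiv; rewrite Rabs_mult, Rabs_inv.
  assert (/ Rabs D <= / m) by (apply Rinv_le_contravar; lra).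
  assert (0 < / Rabs D) by (apply Rinv_0_lt_compat; lra).
  pose proof (Rabs_pos N).
  apply Rle_trans with (K * s2 * / m); [apply Rmult_le_compat; lra| right; field; lra].
Qed.

Lemma expands_inv F k0 k1 : expands F k0 k1 -> k0 <> 0 ->
  expands (fun t => / F t) (/ k0) (- k1 / k0 ^ 2).
Proof.
  intros HF Hk; assert (Hk0 : 0 < Rabs k0) by (apply Rabs_pos_lt; auto).
  destruct (expands_near _ _ _ HF (Rabs k0 / 2) ltac:(lra))
    as [C [K [d [Hd [HC [HK HF']]]]]].
  exists ((C * (3 / 2 * Rabs k0) + K ^ 2) / (Rabs k0 / 2 * k0 ^ 2)), d.
  split; [exact Hd|]; intros t Ht; destruct (HF' t Ht) as [E [L N]].
  assert (HFk : Rabs k0 / 2 <= Rabs (F t) <= 3 / 2 * Rabs k0).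
  { pose proof (Rabs_triang (F t - k0) k0); pose proof (Rabs_triang (F t) (- (F t - k0))).
    rewrite Rabs_Ropp in *; replace (F t - k0 + k0) with (F t) in * by ring;
      replace (F t + - (F t - k0)) with k0 in * by ring; lra. }
  assert (HF0 : F t <> 0) by (intros E0; rewrite E0, Rabs_R0 in HFk; lra).
  replace (/ F t - / k0 - - k1 / k0 ^ 2 * t) with
    ((- (F t - k0 - k1 * t) * F t + (F t - k0) ^ 2) / (F t * k0 ^ 2)) by (field; auto).
  apply Rabs_div_le; [apply Rmult_lt_0_compat; [lra| rewrite <- pow2_abs; nra]| nra| |].
  - eapply Rle_trans; [apply Rabs_triang|]; rewrite Rabs_mult, Rabs_Ropp, <- RPow_abs.
    pose proof (Rabs_pos (F t - k0 - k1 * t)); pose proof (Rabs_pos t).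
    assert (Rabs (F t - k0) ^ 2 <= K ^ 2 * t ^ 2).
    { rewrite (sqr_abs t); replace (K ^ 2 * (Rabs t * Rabs t)) with ((K * Rabs t) ^ 2) by ring.
      apply pow_incr; split; [apply Rabs_pos| exact L]. }
    assert (Rabs (F t - k0 - k1 * t) * Rabs (F t) <= C * t ^ 2 * (3 / 2 * Rabs k0))
      by (apply Rmult_le_compat; auto; lra).
    nra.
  - rewrite Rabs_mult, <- RPow_abs, pow2_abs; apply Rmult_le_compat_r; [nra| lra].
Qed.

Lemma expands_div F G a0 a1 b0 b1 : expands F a0 a1 -> expands G b0 b1 -> b0 <> 0 ->
  expands (fun t => F t / G t) (a0 / b0) (a0 * (- b1 / b0 ^ 2) + a1 / b0).
Proof.
  intros HF HG Hb.
  exact (expands_mult F (fun t => / G t) _ _ _ _ HF (expands_inv _ _ _ HG Hb)).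
Qed.

Lemma expands_pow F a0 a1 n : expands F a0 a1 ->
  expands (fun t => F t ^ n) (a0 ^ n) (INR n * a0 ^ pred n * a1).
Proof.
  intros HF; induction n as [|n IH].
  - simpl; eapply expands_eq; [apply expands_const| reflexivity| ring].
  - eapply expands_eq; [exact (expands_mult _ _ _ _ _ _ HF IH)| reflexivity|].
    rewrite S_INR; destruct n; simpl; ring.
Qed.

Lemma expands_sqrt F k0 k1 r : expands F k0 k1 -> k0 = r ^ 2 -> 0 < r ->
  expands (fun t => sqrt (F t)) r (k1 / (2 * r)).
Proof.
  intros HF Hk Hr.
  destruct (expands_near _ _ _ HF (k0 / 2) ltac:(nra)) as [C [K [d [Hd [HC [HK HF']]]]]].
  exists ((6 * r ^ 2 * C + Rabs k1 * K) / (2 * r ^ 3)), d.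
  split; [exact Hd|]; intros t Ht; destruct (HF' t Ht) as [E [L N]].
  pose proof (Rle_abs (F t - k0)); pose proof (Rle_abs (- (F t - k0))); rewrite Rabs_Ropp in *.
  set (G := sqrt (F t)).
  assert (HG : 0 <= G) by apply sqrt_pos.
  assert (HGG : G * G = F t) by (apply sqrt_sqrt; nra).
  assert (HG2 : G <= 2 * r) by nra.
  (* sqrt F - r = (F - k0) / (sqrt F + r), expanded once more *)
  replace (G - r - k1 / (2 * r) * t) with
    ((2 * r * (G + r) * (F t - k0 - k1 * t) - k1 * t * (F t - k0)) / (2 * r * (G + r) ^ 2))
    by (rewrite <- HGG, Hk; field; lra).
  apply Rabs_div_le; [pose proof (pow_lt r 3 Hr); lra| apply pow2_ge_0| |].
  - eapply Rle_trans; [apply Rabs_triang|]; rewrite Rabs_Ropp, !Rabs_mult.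
    rewrite (Rabs_right 2), (Rabs_right r), (Rabs_right (G + r)) by lra.
    pose proof (Rabs_pos t); pose proof (Rabs_pos k1); pose proof (Rabs_pos (F t - k0)).
    assert (2 * r * (G + r) * Rabs (F t - k0 - k1 * t) <= 6 * r ^ 2 * (C * t ^ 2))
      by (apply Rmult_le_compat; [nra| apply Rabs_pos| simpl; nra| exact E]).
    assert (Rabs k1 * Rabs t * Rabs (F t - k0) <= Rabs k1 * K * t ^ 2).
    { rewrite (sqr_abs t); apply Rle_trans with (Rabs k1 * Rabs t * (K * Rabs t));
        [apply Rmult_le_compat_l; nra| right; ring]. }
    nra.
  - rewrite Rabs_right by nra; nra.
Qed.

Lemma continuous_bounded_near {T : UniformSpace} (F : T -> R) (p : T) :
  continuous F p -> exists e : posreal, forall q, ball p e q -> Rabs (F q) <= Rabs (F p) + 1.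
Proof.
  intros H; destruct (H _ (locally_ball (F p) (mkposreal 1 Rlt_0_1))) as [e He].
  exists e; intros q Hq; specialize (He q Hq); change (Rabs (F q - F p) < 1) in He.
  pose proof (Rabs_triang (F q - F p) (F p)); replace (F q - F p + F p) with (F q) in * by ring.
  lra.
Qed.

Lemma taylor_bound (G Gx Gy Gxx : R -> R -> R) (r M : R) :
  (forall x y, is_derive (fun t => G t y) x (Gx x y)) ->
  (forall x y, is_derive (fun t => G x t) y (Gy x y)) ->
  (forall x, is_derive (fun t => Gx t 0) x (Gxx x 0)) ->
  (forall x y, Rabs x < r -> Rabs y < r -> Rabs (Gy x y) <= M /\ Rabs (Gxx x 0) <= M) ->
  forall x y, Rabs x < r -> Rabs y < r ->
    Rabs (G x y - G 0 0 - Gx 0 0 * x) <= M * (Rabs y + x ^ 2).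
Proof.
  intros HGx HGy HGxx HM x y Hx Hy.
  assert (Hr : 0 < r) by (pose proof (Rabs_pos x); lra).
  assert (HM0 : 0 <= M).
  { pose proof (proj2 (HM 0 0 ltac:(rewrite Rabs_R0; lra) ltac:(rewrite Rabs_R0; lra))).
    pose proof (Rabs_pos (Gxx 0 0)); lra. }
  assert (Hvert : Rabs (G x y - G x 0) <= M * Rabs y).
  { apply (Rle_trans _ (M * Rabs (y - 0))); [|rewrite Rminus_0_r; lra].
    apply (bounded_variation (fun t => G x t) (Gy x)); intros t Ht; rewrite !Rminus_0_r in Ht.
    split; [apply HGy| exact (proj1 (HM x t Hx ltac:(lra)))]. }
  assert (Hslope : forall t, Rabs t <= Rabs x -> Rabs (Gx t 0 - Gx 0 0) <= M * Rabs t).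
  { intros t Ht; apply (Rle_trans _ (M * Rabs (t - 0))); [|rewrite Rminus_0_r; lra].
    apply (bounded_variation (fun s => Gx s 0) (fun s => Gxx s 0)); intros s Hs.
    rewrite !Rminus_0_r in Hs; split; [apply HGxx|].
    exact (proj2 (HM s 0 ltac:(lra) ltac:(rewrite Rabs_R0; lra))). }
  assert (Hhor : Rabs (G x 0 - G 0 0 - Gx 0 0 * x) <= M * Rabs x * Rabs x).
  { replace (G x 0 - G 0 0 - Gx 0 0 * x) with
      ((G x 0 - Gx 0 0 * x) - (G 0 0 - Gx 0 0 * 0)) by ring.
    apply (Rle_trans _ (M * Rabs x * Rabs (x - 0))); [|rewrite Rminus_0_r; lra].
    apply (bounded_variation (fun t => G t 0 - Gx 0 0 * t) (fun t => Gx t 0 - Gx 0 0)).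
    intros t Ht; rewrite !Rminus_0_r in Ht; split.
    - apply (is_derive_transport (fun t => G t 0 - Gx 0 0 * t) _ _ (Gx t 0 - Gx 0 0 * 1));
        [reflexivity| ring|].
      apply (is_derive_minus (fun t => G t 0)); [apply HGx|].
      apply is_derive_scal, (is_derive_id (K := R_AbsRing)).
    - eapply Rle_trans; [apply Hslope; exact Ht| apply Rmult_le_compat_l; lra]. }
  replace (G x y - G 0 0 - Gx 0 0 * x) with ((G x y - G x 0) + (G x 0 - G 0 0 - Gx 0 0 * x))
    by ring.
  eapply Rle_trans; [apply Rabs_triang|]; rewrite (sqr_abs x); lra.
Qed.

Lemma expands_along_parabola (G : R -> R -> R) (gu r M : R) (U : R -> R) (u1 : R) :
  0 < r -> (forall x y, Rabs x < r -> Rabs y < r ->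
    Rabs (G x y - G 0 0 - gu * x) <= M * (Rabs y + x ^ 2)) ->
  expands U 0 u1 -> expands (fun t => G (U t) (- t ^ 2)) (G 0 0) (gu * u1).
Proof.
  intros Hr HG HU.
  destruct (expands_near _ _ _ HU (r / 2) ltac:(lra)) as [C [K [d [Hd [HC [HK HU']]]]]].
  exists (Rabs M * (1 + K ^ 2) + Rabs gu * C), (Rmin d (Rmin 1 (r / 2))).
  split; [repeat apply Rmin_pos; lra|]; intros t Ht.
  pose proof (Rmin_l d (Rmin 1 (r / 2))); pose proof (Rmin_r d (Rmin 1 (r / 2))).
  pose proof (Rmin_l 1 (r / 2)); pose proof (Rmin_r 1 (r / 2)); pose proof (Rabs_pos t).
  destruct (HU' t ltac:(lra)) as [E [L N]]; rewrite Rminus_0_r in L, N.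
  assert (Ht2 : Rabs (- t ^ 2) = t ^ 2) by (rewrite Rabs_Ropp, Rabs_right; nra).
  assert (Hsq : t ^ 2 <= Rabs t) by (rewrite sqr_abs; nra).
  specialize (HG (U t) (- t ^ 2) ltac:(lra) ltac:(lra)); rewrite Ht2 in HG.
  replace (G (U t) (- t ^ 2) - G 0 0 - gu * u1 * t) with
    ((G (U t) (- t ^ 2) - G 0 0 - gu * U t) + gu * (U t - 0 - u1 * t)) by ring.
  eapply Rle_trans; [apply Rabs_triang|]; rewrite Rabs_mult.
  assert (U t ^ 2 <= K ^ 2 * t ^ 2).
  { rewrite (sqr_abs t), (sqr_abs (U t)).
    replace (K ^ 2 * (Rabs t * Rabs t)) with ((K * Rabs t) * (K * Rabs t)) by ring.
    apply Rmult_le_compat; auto using Rabs_pos. }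
  assert (M * (t ^ 2 + U t ^ 2) <= Rabs M * ((1 + K ^ 2) * t ^ 2)).
  { eapply Rle_trans; [apply RRle_abs|]; rewrite Rabs_mult, (Rabs_right (t ^ 2 + U t ^ 2)) by nra.
    apply Rmult_le_compat_l; [apply Rabs_pos| nra]. }
  assert (Rabs gu * Rabs (U t - 0 - u1 * t) <= Rabs gu * (C * t ^ 2))
    by (apply Rmult_le_compat_l; [apply Rabs_pos| exact E]).
  nra.
Qed.

Definition bounded_near_origin (F : R -> R -> R) : Prop :=
  exists r M, 0 < r /\ forall x y, Rabs x < r -> Rabs y < r -> Rabs (F x y) <= M.

Lemma bounded_near_origin_restrict (F : R -> R -> R) :
  bounded_near_origin F -> bounded_near_origin (fun x _ => F x 0).
Proof.
  intros [r [M [Hr H]]]; exists r, M; split; auto; intros x y Hx _.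
  apply H; rewrite ?Rabs_R0; auto.
Qed.

Lemma continuous1_bounded_near_origin (f : R -> R) :
  continuous f 0 -> bounded_near_origin (fun x _ => f x).
Proof.
  intros Hf; destruct (continuous_bounded_near f 0 Hf) as [e He].
  exists e, (Rabs (f 0) + 1); split; [apply cond_pos|]; intros x y Hx _.
  apply He; change (Rabs (x - 0) < e); rewrite Rminus_0_r; exact Hx.
Qed.

Lemma continuous2_bounded_near_origin (F : R -> R -> R) :
  continuous (fun p : R * R => F (fst p) (snd p)) (0, 0) -> bounded_near_origin F.
Proof.
  intros HF; destruct (continuous_bounded_near _ _ HF) as [e He].
  exists e, (Rabs (F 0 0) + 1); split; [apply cond_pos|]; intros x y Hx Hy.
  apply (He (x, y)); split; [change (Rabs (x - 0) < e)| change (Rabs (y - 0) < e)];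
    rewrite Rminus_0_r; assumption.
Qed.

Lemma continuous3_bounded_near_origin (F : R -> R -> R -> R) :
  continuous (fun p : R * R * R => F (fst (fst p)) (snd (fst p)) (snd p)) (0, 0, 0) ->
  bounded_near_origin (fun x z => F x 0 z).
Proof.
  intros HF; destruct (continuous_bounded_near _ _ HF) as [e He].
  exists e, (Rabs (F 0 0 0) + 1); split; [apply cond_pos|]; intros x z Hx Hz.
  pose proof (cond_pos e).
  apply (He (x, 0, z)); split; [split|];
    [change (Rabs (x - 0) < e)| change (Rabs (0 - 0) < e)| change (Rabs (z - 0) < e)];
    rewrite ?Rminus_0_r, ?Rabs_R0; assumption.
Qed.

Lemma expands_smooth_along (G Gx Gy Gxx : R -> R -> R) (U : R -> R) (u1 : R) :
  (forall x y, is_derive (fun t => G t y) x (Gx x y)) ->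
  (forall x y, is_derive (fun t => G x t) y (Gy x y)) ->
  (forall x, is_derive (fun t => Gx t 0) x (Gxx x 0)) ->
  bounded_near_origin Gy -> bounded_near_origin (fun x _ => Gxx x 0) ->
  expands U 0 u1 -> expands (fun t => G (U t) (- t ^ 2)) (G 0 0) (Gx 0 0 * u1).
Proof.
  intros HGx HGy HGxx [r1 [M1 [Hr1 B1]]] [r2 [M2 [Hr2 B2]]] HU.
  apply (expands_along_parabola G _ (Rmin r1 r2) (Rmax M1 M2)); [apply Rmin_pos; auto| |auto].
  apply (taylor_bound G Gx Gy Gxx); auto; intros x y Hx Hy.
  pose proof (Rmin_l r1 r2); pose proof (Rmin_r r1 r2).
  pose proof (Rmax_l M1 M2); pose proof (Rmax_r M1 M2).
  split; [apply (Rle_trans _ M1)| apply (Rle_trans _ M2)];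
    [apply B1| | apply (B2 x y)|]; lra.
Qed.

Lemma expands_Derive_n_along (f : R -> R) (n : nat) (U : R -> R) (u1 : R) :
  smooth1 f -> expands U 0 u1 ->
  expands (fun t => Derive_n f n (U t)) (Derive_n f n 0) (Derive_n f (S n) 0 * u1).
Proof.
  intros Hf; apply (expands_smooth_along (fun x _ => Derive_n f n x) (fun x _ => Derive_n f (S n) x)
    (fun _ _ => 0) (fun x _ => Derive_n f (S (S n)) x)).
  - intros x y; exact (Derive_correct _ _ (Hf n x)).
  - intros x y; apply is_derive_cst.
  - intros x; exact (Derive_correct _ _ (Hf (S n) x)).
  - exists 1, 0; split; [lra|]; intros; rewrite Rabs_R0; lra.
  - apply continuous1_bounded_near_origin.
    exact (ex_derive_continuous (K := R_AbsRing) (V := R_NormedModule) _ _ (Hf _ 0)).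
Qed.

Lemma expands_pd2_along (g : R -> R -> R) (w : list bool) (U : R -> R) (u1 : R) :
  smooth2 g -> expands U 0 u1 ->
  expands (fun t => pd2 w g (U t) (- t ^ 2)) (pd2 w g 0 0) (pd2 (w ++ [true]) g 0 0 * u1).
Proof.
  intros Hg; apply (expands_smooth_along (pd2 w g) (pd2 (w ++ [true]) g) (pd2 (w ++ [false]) g)
    (pd2 (w ++ [true; true]) g)).
  - intros x y; rewrite pd2_snoc; exact (Derive_correct _ _ (proj1 (Hg w x y))).
  - intros x y; rewrite pd2_snoc; exact (Derive_correct _ _ (proj1 (proj2 (Hg w x y)))).
  - intros x; change (w ++ [true; true]) with (w ++ [true] ++ [true]).
    rewrite app_assoc, !pd2_snoc, <- (pd2_snoc w true).
    exact (Derive_correct _ _ (proj1 (Hg (w ++ [true]) x 0))).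
  - apply continuous2_bounded_near_origin, Hg.
  - apply bounded_near_origin_restrict, continuous2_bounded_near_origin, Hg.
Qed.

Lemma expands_pd3_along (c : R -> R -> R -> R) (w : list var3) (U : R -> R) (u1 : R) :
  smooth3 c -> expands U 0 u1 ->
  expands (fun t => pd3 w c (U t) 0 (- t ^ 2)) (pd3 w c 0 0 0) (pd3 (w ++ [X1]) c 0 0 0 * u1).
Proof.
  intros Hc; apply (expands_smooth_along (fun x z => pd3 w c x 0 z)
    (fun x z => pd3 (w ++ [X1]) c x 0 z)
    (fun x z => pd3 (w ++ [X3]) c x 0 z) (fun x z => pd3 (w ++ [X1; X1]) c x 0 z)).
  - intros x y; rewrite pd3_snoc; exact (Derive_correct _ _ (proj1 (Hc w x 0 y))).
  - intros x y; rewrite pd3_snoc; exact (Derive_correct _ _ (proj1 (proj2 (proj2 (Hc w x 0 y))))).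
  - intros x; change (w ++ [X1; X1]) with (w ++ [X1] ++ [X1]).
    rewrite app_assoc, !pd3_snoc, <- (pd3_snoc w X1).
    exact (Derive_correct _ _ (proj1 (Hc (w ++ [X1]) x 0 0))).
  - apply (continuous3_bounded_near_origin (pd3 (w ++ [X3]) c)), Hc.
  - apply (bounded_near_origin_restrict (fun x z => pd3 (w ++ [X1; X1]) c x 0 z)).
    apply (continuous3_bounded_near_origin (pd3 (w ++ [X1; X1]) c)), Hc.
Qed.

Lemma expands_at_minus_sq (d : R -> R) : smooth1 d -> expands (fun t => d (- t ^ 2)) (d 0) 0.
Proof.
  intros Hd; eapply expands_eq; [|reflexivity| apply Rmult_0_l].
  apply (expands_smooth_along (fun _ y => d y) (fun _ _ => 0) (fun _ y => Derive_n d 1 y)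
    (fun _ _ => 0) (fun t => t) 1).
  - intros x y; apply is_derive_cst.
  - intros x y; exact (Derive_correct _ _ (Hd 0%nat y)).
  - intros x; apply is_derive_cst.
  - destruct (continuous1_bounded_near_origin _ (ex_derive_continuous (K := R_AbsRing) (V := R_NormedModule) _ _ (Hd 1%nat 0)))
      as [r [M [Hr H]]].
    exists r, M; split; auto; intros x y Hx Hy; exact (H y x Hy Hx).
  - exists 1, 0; split; [lra|]; intros; rewrite Rabs_R0; lra.
  - exact expands_id.
Qed.

(** * Expansion of the invariants along the cuspidal cross caps *)

Section Expansions.
Variables (f21 f31 d1 d2 d3 : R -> R) (f24 f34 c0 d4 : R -> R -> R)
  (c2 c3 : R -> R -> R -> R) (U : R -> R) (d20 : R).
Hypotheses (Sf21 : smooth1 f21) (Sf31 : smooth1 f31) (Sd1 : smooth1 d1) (Sd2 : smooth1 d2)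
  (Sd3 : smooth1 d3) (Sf24 : smooth2 f24) (Sf34 : smooth2 f34)
  (Sc0 : smooth2 c0) (Sd4 : smooth2 d4) (Sc2 : smooth3 c2) (Sc3 : smooth3 c3).
Hypotheses (HU : expands U 0 (/ d20)) (Hc00 : c0 0 0 = 0) (Hd20 : d20 <> 0).

(* Specific shapes come first: [?g (U t) (- t ^ 2)] also matches [pdu g (U t) (- t ^ 2)]. *)
Ltac expands_auto :=
  match goal with
  | |- expands (fun t => U t) _ _ => exact HU
  | |- expands (fun t => Derive_n ?f ?n (U t)) _ _ =>
      exact (expands_Derive_n_along f n U _ ltac:(assumption) HU)
  | |- expands (fun t => pdu (pdu ?g) (U t) (- t ^ 2)) _ _ =>
      exact (expands_pd2_along g [true; true] U _ ltac:(assumption) HU)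
  | |- expands (fun t => pdu ?g (U t) (- t ^ 2)) _ _ =>
      exact (expands_pd2_along g [true] U _ ltac:(assumption) HU)
  | |- expands (fun t => ?c (U t) 0 (- t ^ 2)) _ _ =>
      exact (expands_pd3_along c [] U _ ltac:(assumption) HU)
  | |- expands (fun t => ?g (U t) (- t ^ 2)) _ _ =>
      exact (expands_pd2_along g [] U _ ltac:(assumption) HU)
  | |- expands (fun t => ?f (U t)) _ _ =>
      exact (expands_Derive_n_along f 0 U _ ltac:(assumption) HU)
  | |- expands (fun t => ?d (- t ^ 2)) _ _ => exact (expands_at_minus_sq d ltac:(assumption))
  | |- expands (fun t => t) _ _ => exact expands_id
  | |- expands (fun t => @?F t + @?G t) _ _ => eapply (expands_plus F G); expands_auto
  | |- expands (fun t => @?F t - @?G t) _ _ => eapply (expands_minus F G); expands_auto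
  | |- expands (fun t => @?F t * @?G t) _ _ => eapply (expands_mult F G); expands_auto
  | |- expands (fun t => @?F t / @?G t) _ _ =>
      eapply (expands_div F G); [expands_auto| expands_auto|]
  | |- expands (fun t => - @?F t) _ _ => eapply (expands_opp F); expands_auto
  | |- expands (fun t => @?F t ^ ?n) _ _ => eapply (expands_pow F _ _ n); expands_auto
  | |- expands (fun _ => ?r) _ _ => exact (expands_const r)
  end.

Ltac expand_invariant :=
  eapply expands_eq; [eapply expands_ext; [intros t; symmetry|]|..];
  [ unfold bias_num, scc_num, hvv_coef, cross_sq, hu_sq, dot, cross, hu, hvv;
    cbn [v1 v2 v3 mkV fst snd];
    rewrite ?jet_y_u, ?jet_y_uu, ?jet_z_u, ?jet_z_uu, ?jet_z_vv, ?jet_z_uvv, ?jet_z_uvvv,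
      ?jet_z_vvvv, ?jet_z_vvvvv by assumption;
    reflexivity
  | expands_auto
  | .. ];
  cbv [pd2 pd3 app]; simpl; rewrite ?Hc00;
  first [ field; assumption | match goal with |- ?e <> 0 => replace e with 1 by ring; lra end ].

Local Notation along X := (fun t => X f21 f31 d1 d2 d3 f24 f34 c0 d4 c2 c3 (- t ^ 2) (U t)).

Lemma expands_hu_sq : expands (along hu_sq) 1 0.
Proof. expand_invariant. Qed.

Lemma expands_cross_sq : expands (along cross_sq) 4 0.
Proof. expand_invariant. Qed.

Lemma expands_bias_num : expands (along bias_num) (48 * c2 0 0 0)
  (48 * (pd3_1 c2 0 0 0 - 2 * f21 0 * pdu c0 0 0) / d20).
Proof. expand_invariant. Qed.

Lemma expands_scc_num : expands (along scc_num) (720 * c3 0 0 0) (720 * pd3_1 c3 0 0 0 / d20).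
Proof. expand_invariant. Qed.

Lemma expands_bias_formula :
  expands (fun t => along hu_sq t * along bias_num t / sqrt (along cross_sq t) ^ 3)
    (6 * c2 0 0 0) (6 * (- 2 * f21 0 * pdu c0 0 0 + pd3_1 c2 0 0 0) / d20).
Proof.
  eapply expands_eq.
  - apply expands_div; [exact (expands_mult _ _ _ _ _ _ expands_hu_sq expands_bias_num)| |].
    + apply expands_pow, (expands_sqrt _ 4 0 2 expands_cross_sq); lra.
    + simpl; lra.
  - field.
  - simpl; field; exact Hd20.
Qed.

Lemma expands_scc_formula :
  expands (fun t => sqrt (sqrt (along hu_sq t)) ^ 5 * along scc_num t
                    / sqrt (sqrt (along cross_sq t)) ^ 7)
    (45 * sqrt 2 * c3 0 0 0) (45 * sqrt 2 * pd3_1 c3 0 0 0 / d20).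
Proof.
  assert (H2 : sqrt 2 ^ 2 = 2) by (apply pow2_sqrt; lra).
  assert (H2p : 0 < sqrt 2) by (apply sqrt_lt_R0; lra).
  assert (E7 : sqrt 2 ^ 7 = 8 * sqrt 2)
    by (replace (sqrt 2 ^ 7) with ((sqrt 2 ^ 2) ^ 3 * sqrt 2) by ring; rewrite H2; ring).
  eapply expands_eq.
  - apply expands_div; [apply expands_mult; [|exact expands_scc_num]| |].
    + apply expands_pow; eapply (expands_sqrt _ 1 _ 1); [|lra| lra].
      apply (expands_sqrt _ 1 0 1 expands_hu_sq); lra.
    + apply expands_pow; eapply (expands_sqrt _ 2 _ (sqrt 2)); [| auto| exact H2p].
      apply (expands_sqrt _ 4 0 2 expands_cross_sq); lra.
    + apply pow_nonzero; lra.
  - rewrite E7; field_simplify; [|lra].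
    apply (Rmult_eq_reg_r (sqrt 2)); [|lra].
    field_simplify; [|lra]. rewrite H2; field.
  - rewrite E7; simpl pred; replace (INR 5) with 5 by (simpl; ring).
    replace (INR 7) with 7 by (simpl; ring).
    apply (Rmult_eq_reg_r (sqrt 2)); [|lra].
    field_simplify; [rewrite H2; field|..]; auto; lra.
Qed.

End Expansions.

Theorem theorem4p5
  (f21 f31 d1 d2 d3 : R -> R) (f24 f34 c0 d4 : R -> R -> R)
  (c2 c3 : R -> R -> R -> R) (ufun : R -> R) :
  smooth1 f21 -> smooth1 f31 -> smooth1 d1 -> smooth1 d2 -> smooth1 d3 ->
  smooth2 f24 -> smooth2 f34 -> smooth2 c0 -> smooth2 d4 ->
  smooth3 c2 -> smooth3 c3 ->
  c0 0 0 = 0 -> c3 0 0 0 <> 0 -> 0 < d2 0 ->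
  let c1 := c1_of d1 d2 d3 d4 in
  let f := f_of f21 f31 f24 f34 (f32_of c0 c1 c2 c3) in
  let d20 := sqrt (d2 0) in
  smooth1 ufun ->
  (exists delta : R, 0 < delta /\
     forall st : R, 0 < Rabs st < delta -> c1 (ufun st) (- st ^ 2) = 0) ->
  (exists C delta : R, 0 < delta /\
     forall st : R, Rabs st < delta -> Rabs (ufun st - st / d20) <= C * st ^ 2) ->
  exists C delta : R, 0 < delta /\
    forall st : R, 0 < Rabs st < delta ->
      let h := fun u v => f u v (- st ^ 2) in
      forall (a b : R -> R -> R) (l : R),
        admissible_field h (ufun st) a b ->
        etaPow a b 3 h (ufun st) 0 = vscale l (etaPow a b 2 h (ufun st) 0) ->
        Rabs (bias h a b (ufun st)
              - (6 * c2 0 0 0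
                 + 6 * (- 2 * f21 0 * pdu c0 0 0 + pd3_1 c2 0 0 0) / d20 * st))
          <= C * st ^ 2 /\
        Rabs (sec_cusp_curv h a b l (ufun st)
              - (45 * sqrt 2 * c3 0 0 0
                 + 45 * sqrt 2 * pd3_1 c3 0 0 0 / d20 * st))
          <= C * st ^ 2.
Proof.
  (* Neither [c3 0 0 0 <> 0] (cuspidality) nor the smoothness of [ufun] enters the expansions. *)
  intros Sf21 Sf31 Sd1 Sd2 Sd3 Sf24 Sf34 Sc0 Sd4 Sc2 Sc3 Hc00 _ Hd2 c1 f d20 _
    [dr [Hdr Hroot]] [Cu [du [Hdu Hu]]].
  assert (Hd20 : 0 < d20) by (apply sqrt_lt_R0; lra).
  assert (HU : expands ufun 0 (/ d20)).
  { exists Cu, du; split; auto; intros t Ht.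
    replace (ufun t - 0 - / d20 * t) with (ufun t - t / d20) by (field; lra); auto. }
  destruct (expands_bias_formula f21 f31 d1 d2 d3 f24 f34 c0 d4 c2 c3 ufun d20)
    as [CB [dB [HdB HB]]]; try assumption; try lra.
  destruct (expands_scc_formula f21 f31 d1 d2 d3 f24 f34 c0 d4 c2 c3 ufun d20)
    as [CC [dC [HdC HC]]]; try assumption; try lra.
  exists (Rmax CB CC), (Rmin dr (Rmin dB dC)); split; [repeat apply Rmin_pos; lra|].
  intros st Hst h a b l Hadm Hl.
  change h with (fam f21 f31 d1 d2 d3 f24 f34 c0 d4 c2 c3 (- st ^ 2)) in *.
  pose proof (Rmin_l dr (Rmin dB dC)); pose proof (Rmin_r dr (Rmin dB dC)).
  pose proof (Rmin_l dB dC); pose proof (Rmin_r dB dC).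
  pose proof (Rmax_l CB CC); pose proof (Rmax_r CB CC); pose proof (pow2_ge_0 st).
  assert (Hc1 : jet f21 f31 d1 d2 d3 f24 f34 c0 d4 c2 c3 (- st ^ 2) (ufun st) 2 0 3 = 0).
  { rewrite jet_z_vvv by assumption; change (6 * c1 (ufun st) (- st ^ 2) = 0).
    rewrite (Hroot st); [ring| lra]. }
  destruct (invariants_fam f21 f31 d1 d2 d3 f24 f34 c0 d4 c2 c3 (- st ^ 2)
    Sf21 Sf31 Sf24 Sf34 Sc0 Sd4 Sc2 Sc3 (ufun st) a b l Hadm Hl Hc1) as [-> ->].
  rewrite !Rminus_plus_distr.
  split; eapply Rle_trans; [apply HB; lra| |apply HC; lra|]; apply Rmult_le_compat_r; lra.
Qed.
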